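(* Let $q$ be a prime power and $n$ a positive integer. Let $g, h\in \mathbb{F}_q[x]$ with $g(x)$ a divisor of $x^n-1$, let $f\in\mathbb{F}_{q^n}[x]$, and let $P(x)=f(L_g(x))+L_h(x)$. Suppose that $L_g(f(L_g(y)))=0$ for every $y\in \mathbb{F}_{q^n}$. Then $P$ is a permutation polynomial of $\mathbb{F}_{q^n}$ if and only if $\gcd(x^n-1, h(x))=1$. Moreover, the hypothesis $L_g(f(L_g(y)))=0$ for all $y\in\mathbb{F}_{q^n}$ holds, for instance, whenever $f(x)=L_G(f_0(x))$ for some $f_0\in \mathbb{F}_{q^n}[x]$, where $G(x)=\frac{x^n-1}{g(x)}$.
   Context: For a polynomial $u(x)=\sum_{i=0}^m a_i x^i\in\mathbb{F}_q[x]$, its linearized $q$-associate is $L_u(x)=\sum_{i=0}^m a_i x^{q^i}$. A permutation polynomial of $\mathbb{F}_{q^n}$ is a polynomial inducing a bijection of $\mathbb{F}_{q^n}$. *)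

From HB Require Import structures.
From mathcomp Require Import all_boot all_order all_algebra all_field.
Set Implicit Arguments. Unset Strict Implicit. Unset Printing Implicit Defensive.
Import GRing.Theory.
Local Open Scope ring_scope.

(* F plays the role of F_q (q = #|F|), L the role of F_{q^n}, a field
   extension of F of dimension n. *)
Definition linq (F : finFieldType) (L : fieldExtType F) (u : {poly F}) : {poly L} :=
  \sum_(i < size u) (u`_i)%:A *: 'X^(#|F| ^ i)%N.

From HB Require Import structures.
From mathcomp Require Import all_boot all_order all_algebra all_field zify.
Set Implicit Arguments. Unset Strict Implicit. Unset Printing Implicit Defensive.
Import GRing.Theory FalgLfun.
Local Open Scope ring_scope.

(* L_u is u(sigma) for the q-Frobenius sigma, an F-linear map of L with
   sigma^n = 1; so u |-> L_u is a ring morphism F[x] -> End_F(L) whose kernel is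
   (x^n - 1), since a nonzero q-polynomial of q-degree < n has fewer than q^n
   roots.  Hence L_h is invertible iff gcd(x^n - 1, h) = 1.  As L_g commutes
   with L_h and kills f(L_g(.)), we get L_g o P = L_h o L_g.  If L_h is
   invertible this yields an explicit inverse of P; conversely if P is onto,
   L_h maps im L_g onto itself, hence injectively, and a vector z of ker L_h
   has L_g z in im L_g /\ ker L_h = 0, so P z = P 0. *)

Section LinearPerturbation.

Variables (K : fieldType) (V : vectType K) (phi psi : 'End(V)) (k P : V -> V).
Hypothesis phi_psiC : forall x, phi (psi x) = psi (phi x).
Hypothesis phi_k_phi : forall x, phi (k (phi x)) = 0.
Hypothesis P_def : forall x, P x = k (phi x) + psi x.

Lemma phi_perturbed x : phi (P x) = psi (phi x).
Proof. by rewrite P_def linearD /= phi_k_phi add0r phi_psiC. Qed.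

Lemma perturbed_inj : injective psi -> injective P.
Proof.
move=> psi_inj x y Pxy.
have phixy : phi x = phi y by apply: psi_inj; rewrite -!phi_perturbed Pxy.
by apply: psi_inj; move: Pxy; rewrite !P_def phixy => /addrI.
Qed.

Lemma bijective_perturbed_inj : bijective P -> injective psi.
Proof.
case=> P' P'K PP'K; apply/lker0P; rewrite -subv0; apply/subvP=> z.
rewrite memv_ker memv0 => /eqP psi_z.
set U := limg phi.
have U_psiU : (U <= psi @: U)%VS.
  apply/subvP=> _ /memv_imgP[u _ ->]; rewrite -[u]PP'K phi_perturbed.
  by rewrite !memv_img ?memvf.
have /eqP : \dim (U :&: lker psi) = 0%N.
  by have := limg_ker_dim psi U; have := dimvS U_psiU; lia.
rewrite dimv_eq0 -subv0 => /subvP/(_ (phi z)).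
rewrite memv_cap memv_ker -phi_psiC psi_z linear0 eqxx memv_img ?memvf //.
rewrite memv0 => /(_ isT) /eqP phi_z.
by apply/eqP/(can_inj P'K); rewrite !P_def phi_z psi_z !linear0.
Qed.

Lemma bijective_perturbedP : bijective P <-> injective psi.
Proof.
split=> [|psi_inj]; first exact: bijective_perturbed_inj.
have /lker0_lfunVK psiVK : lker psi == 0%VS by apply/lker0P.
set psiV := (psi^-1)%VF in psiVK.
have phi_psiV y : phi (psiV y) = psiV (phi y).
  by apply: psi_inj; rewrite -phi_psiC !psiVK.
(* Q is forced: applying phi to P x = y gives phi x = psiV (phi y). *)
pose Q y := psiV (y - k (phi (psiV y))).
have phi_Q y : phi (Q y) = phi (psiV y).
  by rewrite /Q phi_psiV raddfB /= phi_k_phi subr0 phi_psiV.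
have QK : cancel Q P by move=> y; rewrite P_def phi_Q psiVK addrC subrK.
exact: Bijective (inj_can_sym QK (perturbed_inj psi_inj)) QK.
Qed.

End LinearPerturbation.

Section LinearizedPolynomials.

Variables (F : finFieldType) (L : fieldExtType F).
Local Notation q := #|F|.
Local Notation n := (\dim {:L}).
Local Notation N := ('X^n - 1 : {poly F}).
Implicit Types (u v : {poly F}) (x : L).

Lemma dim_gt0 : (0 < n)%N.
Proof. exact: (adim_gt0 {:L}%AS). Qed.

Lemma size_Xn_sub1 : size N = n.+1.
Proof. exact: size_XnsubC 1 dim_gt0. Qed.

Lemma Xn_sub1_neq0 : N != 0.
Proof. by rewrite -size_poly_eq0 size_Xn_sub1. Qed.

Lemma pchar_nat_card : [pchar L].-nat q.
Proof.
have [p p_pr pFp] := finPcharP F.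
by rewrite (card_pprimeChar pFp) pnatX pnatE // (pchar_lalg L) pFp.
Qed.

Definition qfrob (x : L) := x ^+ q.

Lemma qfrob_is_linear : linear qfrob.
Proof.
move=> a x y; rewrite /qfrob (exprDn_pchar _ _ pchar_nat_card); congr (_ + _).
rewrite -[a *: x]mulr_algl -[a *: _ ^+ _]mulr_algl exprMn.
by rewrite -in_algE -rmorphXn expf_card.
Qed.

HB.instance Definition _ := GRing.isLinear.Build F L L *:%R qfrob qfrob_is_linear.

Definition frob : 'End(L) := linfun qfrob.

Definition linq_lfun : {poly F} -> 'End(L) := horner_alg frob.
HB.instance Definition _ := GRing.RMorphism.on linq_lfun.

Lemma frobX_lfunE i x : (frob ^+ i) x = x ^+ (q ^ i).
Proof.
elim: i => [|i IHi]; first by rewrite expr0 id_lfunE.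
by rewrite exprSr lfun_mulE IHi lfunE /= /qfrob -exprM expnSr.
Qed.

Lemma horner_linq u x : (linq L u).[x] = linq_lfun u x.
Proof.
rewrite /linq_lfun -{2}[u]coefK poly_def rmorph_sum sum_lfunE horner_sum.
apply: eq_bigr => i _; rewrite hornerZ hornerXn -mul_polyC rmorphM /=.
by rewrite horner_algC rmorphXn /= horner_algX !mulr_algl scale_lfunE frobX_lfunE.
Qed.

Lemma linq_lfunM u v x : linq_lfun (u * v) x = linq_lfun u (linq_lfun v x).
Proof. by rewrite /linq_lfun mulrC rmorphM lfun_mulE. Qed.

Lemma linq_lfunC u v x : linq_lfun u (linq_lfun v x) = linq_lfun v (linq_lfun u x).
Proof. by rewrite -!linq_lfunM mulrC. Qed.

Lemma card_finvect : #|finvect_type L| = (q ^ n)%N.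
Proof.
by rewrite -(card_vspacef (Vector.class (finvect_type L : vectType F))) card_vspace.
Qed.

Lemma linq_lfun_Xn_sub1 : linq_lfun N = 0.
Proof.
apply/lfunP=> x; rewrite /linq_lfun rmorphB rmorphXn rmorph1 /= horner_algX.
rewrite add_lfunE opp_lfunE id_lfunE frobX_lfunE zero_lfunE -card_finvect.
by rewrite (expf_card (x : FinFieldExtType L)) subrr.
Qed.

Lemma size_linq u : u != 0 -> size (linq L u) = (q ^ (size u).-1).+1.
Proof.
move=> u_neq0; have [m sz_u] : exists m, size u = m.+1.
  by exists (size u).-1; rewrite prednK // size_poly_gt0.
have lc_neq0 : (u`_m)%:A != 0 :> L.
  by rewrite -in_algE fmorph_eq0 -[m]/(m.+1.-1) -sz_u -lead_coefE lead_coef_eq0.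
rewrite /linq sz_u big_ord_recr /= addrC size_polyDl size_scale ?size_polyXn //.
apply: leq_ltn_trans (size_sum _ _ _) _; rewrite ltnS; apply/bigmax_leqP=> i _.
by rewrite (leq_trans (size_scale_leq _ _)) // size_polyXn ltn_exp2l ?finNzRing_gt1.
Qed.

Lemma linq_lfun_neq0 u : u != 0 -> (size u <= n)%N -> linq_lfun u != 0.
Proof.
move=> u_neq0 sz_u; apply/eqP=> lin_u0.
have linq_u_neq0 : linq L u != 0 by rewrite -size_poly_eq0 size_linq.
have := max_poly_roots linq_u_neq0 _ (enum_uniq (finvect_type L)).
have -> : all (root (linq L u)) (enum (finvect_type L)).
  by apply/allP=> x _; rewrite /root horner_linq lin_u0 zero_lfunE.
have := card_finvect; rewrite cardT => -> /(_ isT).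
rewrite size_linq // ltnS leq_exp2l ?finNzRing_gt1 //.
have : (0 < size u)%N by rewrite size_poly_gt0.
lia.
Qed.

Lemma linq_lfun_eq0 u : (linq_lfun u == 0) = (N %| u).
Proof.
apply/eqP/modp_eq0P=> [lin_u0 | /modp_eq0P/dvdpP[v ->]]; last first.
  by rewrite rmorphM /= linq_lfun_Xn_sub1 mulr0.
have lin_mod : linq_lfun (u %% N) = linq_lfun u.
  by rewrite {2}(divp_eq u N) rmorphD rmorphM /= linq_lfun_Xn_sub1 mulr0 add0r.
apply/eqP; apply: contraT => r_neq0.
suff : (size (u %% N)%R <= n)%N.
  by move/(linq_lfun_neq0 r_neq0); rewrite lin_mod lin_u0 eqxx.
by rewrite -ltnS -size_Xn_sub1 ltn_modp Xn_sub1_neq0.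
Qed.

Lemma injective_linq_lfunP h : injective (linq_lfun h) <-> coprimep N h.
Proof.
split=> [h_inj | /Bezout_eq1_coprimepP[[a b] /= Bezout]]; last first.
  apply: (can_inj (g := linq_lfun b)) => x.
  rewrite -linq_lfunM; move/eqP: Bezout; rewrite addrC eq_sym -subr_eq => /eqP <-.
  by rewrite rmorphB rmorph1 rmorphM /= linq_lfun_Xn_sub1 mulr0 subr0 id_lfunE.
rewrite /coprimep -dvdp1; set d := gcdp N h; set e := N %/ d.
have eK : e * d = N := divpK (dvdp_gcdl N h).
have e_neq0 : e != 0 by apply: contra_neq Xn_sub1_neq0 => e0; rewrite -eK e0 mul0r.
have lin_e0 : linq_lfun e = 0.
  apply/lfunP=> x; apply: h_inj; rewrite zero_lfunE linear0.
  rewrite -(divpK (dvdp_gcdr N h)) -/d linq_lfunM -(linq_lfunM d) [d * e]mulrC eK.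
  by rewrite linq_lfun_Xn_sub1 zero_lfunE !linear0.
move/eqP: lin_e0; rewrite linq_lfun_eq0 -eK -{2}[e]mulr1.
by rewrite dvdp_mul2l.
Qed.

End LinearizedPolynomials.

Theorem proposition2p6 (F : finFieldType) (L : fieldExtType F) (n : nat)
    (g h : {poly F}) :
  (0 < n)%N -> \dim {:L} = n -> g %| 'X^n - 1 ->
  (forall f : {poly L},
     (forall y : L, (linq L g).[f.[(linq L g).[y]]] = 0) ->
     (bijective (fun x : L => (f \Po linq L g + linq L h).[x])
        <-> coprimep ('X^n - 1) h))
  /\
  (forall f0 : {poly L},
     let f := linq L (('X^n - 1) %/ g) \Po f0 in
     forall y : L, (linq L g).[f.[(linq L g).[y]]] = 0).
Proof.
move=> _ dimL g_dvd; subst n; split=> [f f_vanish | f0 f y]; last first.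
  rewrite /f horner_comp !horner_linq -linq_lfunM mulrC divpK //.
  by rewrite linq_lfun_Xn_sub1 zero_lfunE.
have f_vanish' y : linq_lfun L g (f.[linq_lfun L g y]) = 0.
  by rewrite -!horner_linq.
have P_def x :
    (f \Po linq L g + linq L h).[x] = f.[linq_lfun L g x] + linq_lfun L h x.
  by rewrite hornerD horner_comp !horner_linq.
rewrite -injective_linq_lfunP.
exact: bijective_perturbedP (linq_lfunC g h) f_vanish' P_def.
Qed.
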